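(* Let $N_0,N_B,N_f\ge1$ be integers with $N_B$ dividing $N_0$, and set $n=N_0/N_B$. Let $\Sigma_{\tilde x}\in\mathbb{R}^{N_B\times N_B}$ be positive definite, let $\Sigma_x=\mathrm{blockdiag}(\Sigma_{\tilde x},\dots,\Sigma_{\tilde x})\in\mathbb{R}^{N_0\times N_0}$ ($n$ identical blocks), let $\sigma^2>0$ and $F>0$. Let $X\sim\mathcal{N}(0;\Sigma_x)$, and for $W\in\mathbb{R}^{N_f\times N_B}$ and $b\in\mathbb{R}^{nN_f}$ let $Z\in\mathbb{R}^{nN_f}$ satisfy $Z\mid X,W,b\sim\mathcal{N}(X\circledast W+b;\,\sigma^2 I_{nN_f})$. Define $\mathrm{MMI}(X;Z)\triangleq\sup\{I_{W,b}(X;Z): W\in\mathbb{R}^{N_f\times N_B},\ b\in\mathbb{R}^{nN_f},\ \mathrm{Tr}(W^TW)\le F\}$. Then $$\mathrm{MMI}(X;Z)=\frac{N_0}{N_B}\,M_{LFC}(F;\Sigma_{\tilde x},N_B,N_f).$$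
   Context: $\mathcal{N}(\mu;A)$ denotes the Gaussian distribution with mean $\mu$ and covariance $A$. For $j=1,\dots,n$, $\tilde X_j\in\mathbb{R}^{N_B}$ is the slice of $X$ on indices $(j-1)N_B+1,\dots,jN_B$, and $X\circledast W\triangleq\begin{bmatrix}(W\tilde X_1)^T & (W\tilde X_2)^T&\cdots&(W\tilde X_n)^T\end{bmatrix}^T\in\mathbb{R}^{nN_f}$ (a non-overlapping-stride convolution with $N_f$ filters). $I_{W,b}(X;Z)$ is the mutual information between $X$ and $Z$ under the joint law determined by $W,b$. For a positive definite $\Sigma\in\mathbb{R}^{p\times p}$ and integers $p,q\ge1$, $M_{LFC}(F;\Sigma,p,q)$ denotes the maximum mutual information of the single-layer linear fully connected Gaussian model: $M_{LFC}(F;\Sigma,p,q)=\sup\{I(X';Z'): W'\in\mathbb{R}^{q\times p},\ b'\in\mathbb{R}^q,\ \mathrm{Tr}(W'^TW')\le F\}$ where $X'\sim\mathcal{N}(0;\Sigma)$ and $Z'\mid X'\sim\mathcal{N}(W'X'+b';\sigma^2 I_q)$ (its value is given explicitly by the water-filling formulas: with $\lambda_1\ge\dots\ge\lambda_p$ the eigenvalues of $\Sigma$, $\tilde N=\min(p,q)$, $\rho_k=\sigma^2(k/\lambda_k-\sum_{i\le k}1/\lambda_i)$, and $m$ the largest $k\le\tilde N$ with $\rho_k\le F$, it equals $\frac m2\log\frac{F+\sigma^2\sum_{i\le m}1/\lambda_i}{\sigma^2 m}+\frac12\sum_{i\le m}\log\lambda_i$). *)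

From HB Require Import structures.
From mathcomp Require Import all_boot all_order all_algebra.
From mathcomp Require Import all_classical all_reals all_analysis.
Set Implicit Arguments. Unset Strict Implicit. Unset Printing Implicit Defensive.
Import Order.TTheory GRing.Theory Num.Theory.
Local Open Scope ring_scope.
Local Open Scope classical_set_scope.

Section Defs.
Variable R : realType.

(* entry (i,j) of a matrix addressed by natural numbers (0 outside range) *)
Definition mxat (p q : nat) (A : 'M[R]_(p, q)) (i j : nat) : R :=
  if (insub i : option 'I_p) is Some a then
    if (insub j : option 'I_q) is Some b then A a b else 0
  else 0.

Definition posdef (p : nat) (S : 'M[R]_p) : Prop :=
  S^T = S /\ forall x : 'cV[R]_p, x != 0 -> 0 < (x^T *m S *m x) 0 0.

(* Sigma_x = blockdiag(St, ..., St) in R^{N0 x N0}, blocks of size NB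
   (0-based index i lies in block i %/ NB at position i %% NB) *)
Definition blkdiag_rep (N0 NB : nat) (St : 'M[R]_NB) : 'M[R]_N0 :=
  \matrix_(i < N0, j < N0)
    (if (i %/ NB == j %/ NB)%N then mxat St (i %% NB)%N (j %% NB)%N else 0).

(* Matrix of the linear map X |-> conv(X, W) (non-overlapping stride convolution):
   output block k (indices k*Nf .. k*Nf+Nf-1) is W * (input block k). *)
Definition convmx (N0 NB Nf : nat) (W : 'M[R]_(Nf, NB))
  : 'M[R]_((N0 %/ NB * Nf)%N, N0) :=
  \matrix_(i < (N0 %/ NB * Nf)%N, j < N0)
    (if (i %/ Nf == j %/ NB)%N then mxat W (i %% Nf)%N (j %% NB)%N else 0).

(* differential entropy (nats) of N(mu; K) in R^q *)
Definition gauss_entropy (q : nat) (K : 'M[R]_q) : R :=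
  (q%:R * ln (2 * pi * expR 1) + ln (\det K)) / 2.

(* Mutual information I(X;Z) for X ~ N(0;S) in R^p and
   Z | X ~ N(A X + b; s2 I_q): I = h(Z) - h(Z|X), where
   Z ~ N(b; A S A^T + s2 I) and h(Z|X) = h(N(0; s2 I)). *)
Definition lingauss_MI (p q : nat) (S : 'M[R]_p) (A : 'M[R]_(q, p))
  (b : 'cV[R]_q) (s2 : R) : R :=
  gauss_entropy (A *m S *m A^T + s2%:M) - gauss_entropy (s2%:M : 'M[R]_q).

Definition M_LFC (s2 F : R) (p q : nat) (S : 'M[R]_p) : \bar R :=
  ereal_sup [set v : \bar R | exists (W' : 'M[R]_(q, p)) (b' : 'cV[R]_q),
     \tr (W'^T *m W') <= F /\ v = (lingauss_MI S W' b' s2)%:E].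

Definition MMI_conv (s2 F : R) (N0 NB Nf : nat) (St : 'M[R]_NB) : \bar R :=
  ereal_sup [set v : \bar R | exists (W : 'M[R]_(Nf, NB))
       (b : 'cV[R]_((N0 %/ NB * Nf)%N)),
     \tr (W^T *m W) <= F /\
     v = (lingauss_MI (blkdiag_rep N0 St) (convmx N0 W) b s2)%:E].

End Defs.

From HB Require Import structures.
From mathcomp Require Import all_boot all_order all_algebra.
From mathcomp Require Import all_classical all_reals all_analysis.
From mathcomp Require Import mxtens ring.
Set Implicit Arguments.
Unset Strict Implicit.
Unset Printing Implicit Defensive.
Import Order.TTheory GRing.Theory Num.Theory.
Local Open Scope ring_scope.

(* With n = N0 / NB blocks, the convolution matrix is the Kronecker product
   I_n (x) W and the input covariance is I_n (x) Sigma, so the output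
   covariance is I_n (x) (W Sigma W^T + s2 I).  Its determinant is the n-th
   power of the single-block one, hence the mutual information of the
   convolutional layer is exactly n times that of the fully connected layer
   with the same W, and the two suprema differ by the factor n. *)

Lemma tensmxDr (R : pzRingType) m n p q (A : 'M[R]_(m, n)) (B C : 'M[R]_(p, q)) :
  A *t (B + C) = A *t B + A *t C.
Proof. by apply/matrixP => i j; rewrite !mxE mulrDr. Qed.

Lemma tens1mx_scalar (R : pzRingType) n q (c : R) :
  (1%:M : 'M[R]_n) *t (c%:M : 'M[R]_q) = c%:M.
Proof.
apply/matrixP => i j.
case: (mxtens_indexP i) => i1 i2; case: (mxtens_indexP j) => j1 j2.
rewrite tensmxE !mxE (can_eq (@mxtens_indexK _ _)) xpair_eqE.
by case: (i1 == j1); case: (i2 == j2); rewrite ?mul1r ?mul0r.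
Qed.

Lemma det_castmx (R : comPzRingType) n m (e : n = m) (A : 'M[R]_n) :
  \det (castmx (e, e) A) = \det A.
Proof. by case: m / e; rewrite castmx_id. Qed.

Lemma det_tens1mx (R : comPzRingType) n q (K : 'M[R]_q) :
  \det ((1%:M : 'M[R]_n) *t K) = \det K ^+ n.
Proof.
elim: n => [|n IHn]; first by rewrite det_mx00 expr0.
rewrite (scalar_mx_block 1 n) tens_block_mx !tens0mx det_castmx det_ublock IHn.
by rewrite tens_scalar_mx scale1r det_castmx exprS.
Qed.

Lemma castmx_mulmx (R : pzRingType) m n n' p p' (en : n = n') (ep : p = p')
    (A : 'M[R]_(m, n)) (B : 'M[R]_(n, p)) :
  castmx (erefl m, en) A *m castmx (en, ep) B = castmx (erefl m, ep) (A *m B).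
Proof. by case: n' / en; case: p' / ep; rewrite !castmx_id. Qed.

Lemma mxatE (R : realType) p q (A : 'M[R]_(p, q)) (a : 'I_p) (b : 'I_q) :
  mxat A a b = A a b.
Proof. by rewrite /mxat !valK. Qed.

Lemma blkdiag_rep_tens (R : realType) N0 NB (St : 'M[R]_NB)
    (e : (N0 %/ NB * NB)%N = N0) :
  blkdiag_rep N0 St = castmx (e, e) ((1%:M : 'M[R]_(N0 %/ NB)) *t St).
Proof.
apply/matrixP => i j; rewrite castmxE !mxE -(mxatE St) -val_eqE /=.
by case: eqP; rewrite ?mul1r ?mul0r.
Qed.

Lemma convmx_tens (R : realType) N0 NB Nf (W : 'M[R]_(Nf, NB))
    (e : (N0 %/ NB * NB)%N = N0) :
  convmx N0 W = castmx (erefl, e) ((1%:M : 'M[R]_(N0 %/ NB)) *t W).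
Proof.
apply/matrixP => i j; rewrite castmxE !mxE -(mxatE W) -val_eqE /=.
by case: eqP; rewrite ?mul1r ?mul0r.
Qed.

Lemma convmx_covariance (R : realType) N0 NB Nf (W : 'M[R]_(Nf, NB))
    (St : 'M[R]_NB) :
  (NB %| N0)%N ->
  convmx N0 W *m blkdiag_rep N0 St *m (convmx N0 W)^T =
    (1%:M : 'M[R]_(N0 %/ NB)) *t (W *m St *m W^T).
Proof.
move=> /divnK e.
rewrite (convmx_tens _ e) (blkdiag_rep_tens _ e) trmx_cast /= !castmx_mulmx.
by rewrite castmx_id trmx_tens !tensmx_mul trmx1 !mulmx1.
Qed.

Definition psdmx (R : numDomainType) q (M : 'M[R]_q) :=
  forall v : 'rV[R]_q, 0 <= (v *m M *m v^T) 0 0.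

Lemma posdef_congr_psdmx (R : realType) p q (S : 'M[R]_p) (A : 'M[R]_(q, p)) :
  posdef S -> psdmx (A *m S *m A^T).
Proof.
move=> [_ S_pd] v.
have -> : v *m (A *m S *m A^T) *m v^T = (v *m A)^T^T *m S *m (v *m A)^T.
  by rewrite trmxK trmx_mul !mulmxA.
have [->|vA_neq0] := eqVneq (v *m A)^T 0; first by rewrite mulmx0 mxE.
exact/ltW/S_pd.
Qed.

Lemma mulmx_trmx_gt0 (R : realDomainType) q (v : 'rV[R]_q) :
  v != 0 -> 0 < (v *m v^T) 0 0.
Proof.
move=> v_neq0; have sq_ge0 (k : 'I_q) : 0 <= v 0 k * v^T k 0.
  by rewrite mxE -expr2 sqr_ge0.
rewrite lt_def mxE sumr_ge0 // andbT; apply: contra v_neq0 => /eqP v_sum0.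
apply/eqP/matrixP => i j; rewrite (ord1 i) !mxE.
have /eqP := psumr_eq0P (fun k _ => sq_ge0 k) v_sum0 (i := j) isT.
by rewrite mxE -expr2 sqrf_eq0 => /eqP.
Qed.

Lemma det_scalar_addZ_psd_neq0 (R : realFieldType) q (M : 'M[R]_q) (s u : R) :
  0 < s -> 0 <= u -> psdmx M -> \det (s%:M + u *: M) != 0.
Proof.
move=> s_gt0 u_ge0 M_psd; apply/negP => /det0P [v v_neq0 v_ker].
have : (v *m (s%:M + u *: M) *m v^T) 0 0 = 0 by rewrite v_ker mul0mx mxE.
have := mulmx_trmx_gt0 v_neq0; have := M_psd v.
rewrite mulmxDr mulmxDl mul_mx_scalar -scalemxAr -!scalemxAl !mxE.
move=> vMv_ge0 vv_gt0 /eqP; rewrite gt_eqF //.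
by rewrite ltr_pwDl ?mulr_ge0 ?mulr_gt0.
Qed.

Lemma det_psd_add_scalar_gt0 (R : rcfType) q (M : 'M[R]_q) (s : R) :
  0 < s -> psdmx M -> 0 < \det (M + s%:M).
Proof.
move=> s_gt0 M_psd.
(* u |-> det (s I + u M) is a polynomial; it is positive at 0 and has no root in [0, 1]. *)
pose P : 'M[{poly R}]_q := \matrix_(i, j) (((s%:M : 'M[R]_q) i j)%:P + M i j *: 'X).
have detP u : (\det P).[u] = \det (s%:M + u *: M).
  rewrite -[_.[u]]/(horner_eval u (\det P)) -det_map_mx; congr (\det _).
  apply/matrixP => i j; rewrite !mxE /= /horner_eval.
  by rewrite hornerD hornerC hornerZ hornerX mulrC.
rewrite addrC -[M]scale1r -detP ltNge; apply/negP => detP1_le0.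
have [|x /andP[x_ge0 _]] := @poly_ivt R (- \det P) 0 1 ler01.
  by rewrite !hornerN oppr_le0 oppr_ge0 detP1_le0 detP scale0r addr0 det_scalar exprn_ge0 ?ltW.
by rewrite /root hornerN oppr_eq0 detP; apply/negP/det_scalar_addZ_psd_neq0.
Qed.

Lemma gauss_entropy_tens1mx (R : realType) n q (K : 'M[R]_q) :
  0 < \det K -> gauss_entropy ((1%:M : 'M[R]_n) *t K) = n%:R * gauss_entropy K.
Proof.
move=> detK_gt0; rewrite /gauss_entropy det_tens1mx lnXn // natrM -mulr_natr.
by ring.
Qed.

Lemma lingauss_MI_conv (R : realType) N0 NB Nf (St : 'M[R]_NB)
    (W : 'M[R]_(Nf, NB)) (b : 'cV[R]_(N0 %/ NB * Nf)) (b' : 'cV[R]_Nf) (s2 : R) :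
  (NB %| N0)%N -> posdef St -> 0 < s2 ->
  lingauss_MI (blkdiag_rep N0 St) (convmx N0 W) b s2 =
    (N0 %/ NB)%:R * lingauss_MI St W b' s2.
Proof.
move=> NB_dvd St_pd s2_gt0.
rewrite /lingauss_MI convmx_covariance // -tens1mx_scalar -tensmxDr.
rewrite !gauss_entropy_tens1mx ?mulrBr // ?det_scalar ?exprn_gt0 //.
exact/det_psd_add_scalar_gt0/posdef_congr_psdmx.
Qed.

Theorem theorem3 (R : realType) (N0 NB Nf : nat) (St : 'M[R]_NB) (s2 F : R) :
  (0 < N0)%N -> (0 < NB)%N -> (0 < Nf)%N -> (NB %| N0)%N ->
  posdef St -> 0 < s2 -> 0 < F ->
  MMI_conv s2 F N0 Nf St = (((N0 %/ NB)%N%:R)%:E * M_LFC s2 F Nf St)%E.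
Proof.
move=> N0_gt0 NB_gt0 _ NB_dvd St_pd s2_gt0 _.
have n_gt0 : 0 < (N0 %/ NB)%:R :> R by rewrite ltr0n divn_gt0 // dvdn_leq.
rewrite /MMI_conv /M_LFC -(ereal_sup_pZl _ n_gt0); congr ereal_sup.
apply/seteqP; split => v /=.
- move=> [W [b [trW ->]]]; exists (lingauss_MI St W 0 s2)%:E.
    by exists W, 0.
  by rewrite (lingauss_MI_conv _ _ 0) // EFinM.
- move=> [_ [W [b [trW ->]]] <-]; exists W, 0; split => //.
  by rewrite (lingauss_MI_conv _ _ b) // EFinM.
Qed.
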